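(* Let $\alpha>0$ and let $\beta:[0,\infty)\to(0,\infty)$ be continuous. Let $S_0>0$, $I_0\ge 0$, and let $(S(t),I(t),R(t))$ be the solution of $$\dot S=-\frac{\beta(t)SI}{S+I},\qquad \dot I=\frac{\beta(t)SI}{S+I}-\alpha I,\qquad \dot R=\alpha I$$ with $S(0)=S_0$, $I(0)=I_0$. Then, for $t\ge 0$, $$\frac{I(t)}{S(t)}=y(t):=\frac{I_0}{S_0}\exp\left(\int_0^t(\beta(s)-\alpha)\,ds\right),$$ $$S(t)=S_0\exp\left(-\int_0^t\frac{\beta(s)y(s)}{1+y(s)}\,ds\right),\qquad I(t)=S(t)\,y(t).$$
   Context: Modified SIR epidemiological model with constant recovery rate $\alpha$ and time-dependent transmission rate $\beta(t)$; $S,I,R$ are fractions of susceptible, infective and removed individuals. *)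

From Stdlib Require Import Reals.
From Coquelicot Require Import Coquelicot.
Open Scope R_scope.

Definition continuous_on_nonneg (f : R -> R) : Prop :=
  (forall t, 0 < t -> continuous f t) /\
  filterlim f (at_right 0) (locally (f 0)).

Definition solves_on_nonneg (f f' : R -> R) : Prop :=
  (forall t, 0 < t -> is_derive f t (f' t)) /\ continuous_on_nonneg f.

From Stdlib Require Import Reals Lra.
From Coquelicot Require Import Coquelicot.
Open Scope R_scope.

(* The equation for S is linear, S' = -λ S with λ = β I / (S + I), so
   S = S0 exp (-∫ λ) stays positive.  The nonlinear terms cancel in the
   equation for the ratio x = I / S, which is again linear, x' = (β - α) x;
   hence x = y, and then λ = β y / (1 + y).  A solution of a linear equation
   f' = c f is found by noting that f exp (-∫ c) has zero derivative on
   (0, +oo), hence is constant on [0, +oo) by the mean value theorem and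
   right-continuity at 0. *)

(* Coquelicot's continuity and integration lemmas are two-sided, so functions
   given on [0, +oo) are extended to R by their value at 0. *)
Definition extend_nonneg (f : R -> R) (s : R) : R := f (Rmax s 0).

Lemma extend_nonneg_id (f : R -> R) (s : R) : 0 <= s -> extend_nonneg f s = f s.
Proof. intros Hs; unfold extend_nonneg; now rewrite Rmax_left. Qed.

Lemma ball_R_interval (x y : R) (e : R) : ball x e y -> x - e < y < x + e.
Proof.
  intros Hy; cbn in Hy; unfold AbsRing_ball, abs, minus, plus, opp in Hy; cbn in Hy.
  apply Rabs_def2 in Hy; lra.
Qed.

Lemma continuous_on_nonneg_of_eq (h f : R -> R) :
  (forall x, continuous h x) -> (forall s, 0 <= s -> h s = f s) ->
  continuous_on_nonneg f.
Proof.
  intros Hh Hhf; split.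
  - intros t Ht; apply continuous_ext_loc with (g := h); auto.
    exists (mkposreal _ Ht); intros y Hy%ball_R_interval; cbn in Hy.
    apply Hhf; lra.
  - rewrite <- (Hhf 0) by lra.
    apply filterlim_within_ext with (f := h).
    + intros s Hs; apply Hhf; lra.
    + eapply filterlim_filter_le_1; [apply filter_le_within | apply Hh].
Qed.

Lemma continuous_extend_nonneg (f : R -> R) :
  continuous_on_nonneg f -> forall x, continuous (extend_nonneg f) x.
Proof.
  intros [Hpos H0] x.
  destruct (Rtotal_order x 0) as [Hx | [-> | Hx]].
  - apply continuous_ext_loc with (g := fun _ => f 0); [|apply continuous_const].
    assert (Hd : 0 < - x) by lra.
    exists (mkposreal _ Hd); intros y Hy%ball_R_interval; cbn in Hy.
    unfold extend_nonneg; rewrite Rmax_right; lra.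
  - intros P HP; unfold extend_nonneg at 1 in HP; rewrite Rmax_right in HP by lra.
    destruct (H0 P HP) as [d Hd].
    exists d; intros y Hy; unfold extend_nonneg.
    destruct (Rle_lt_dec y 0).
    + rewrite Rmax_right by lra; exact (locally_singleton _ _ HP).
    + rewrite Rmax_left by lra; auto.
  - apply continuous_ext_loc with (g := f); [|auto].
    exists (mkposreal _ Hx); intros y Hy%ball_R_interval; cbn in Hy.
    symmetry; apply extend_nonneg_id; lra.
Qed.

Lemma continuous_on_nonneg_extend (f : R -> R) :
  continuous_on_nonneg f <-> forall x, continuous (extend_nonneg f) x.
Proof.
  split; [apply continuous_extend_nonneg|].
  intros Hf; apply (continuous_on_nonneg_of_eq _ _ Hf), extend_nonneg_id.
Qed.

Lemma continuous_on_nonneg_const (a : R) : continuous_on_nonneg (fun _ => a).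
Proof. apply continuous_on_nonneg_extend; intros x; apply continuous_const. Qed.

Lemma continuous_on_nonneg_comp (g f : R -> R) :
  (forall x, continuous g x) -> continuous_on_nonneg f ->
  continuous_on_nonneg (fun t => g (f t)).
Proof.
  rewrite !continuous_on_nonneg_extend; intros Hg Hf x.
  exact (continuous_comp (extend_nonneg f) g x (Hf x) (Hg _)).
Qed.

Lemma continuous_on_nonneg_opp (f : R -> R) :
  continuous_on_nonneg f -> continuous_on_nonneg (fun t => - f t).
Proof.
  rewrite !continuous_on_nonneg_extend; intros Hf x.
  exact (continuous_opp (extend_nonneg f) x (Hf x)).
Qed.

Lemma continuous_on_nonneg_plus (f g : R -> R) :
  continuous_on_nonneg f -> continuous_on_nonneg g ->
  continuous_on_nonneg (fun t => f t + g t).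
Proof.
  rewrite !continuous_on_nonneg_extend; intros Hf Hg x.
  exact (continuous_plus (extend_nonneg f) (extend_nonneg g) x (Hf x) (Hg x)).
Qed.

Lemma continuous_on_nonneg_mult (f g : R -> R) :
  continuous_on_nonneg f -> continuous_on_nonneg g ->
  continuous_on_nonneg (fun t => f t * g t).
Proof.
  rewrite !continuous_on_nonneg_extend; intros Hf Hg x.
  exact (continuous_mult (extend_nonneg f) (extend_nonneg g) x (Hf x) (Hg x)).
Qed.

Lemma continuous_on_nonneg_div (f g : R -> R) :
  continuous_on_nonneg f -> continuous_on_nonneg g ->
  (forall t, 0 <= t -> g t <> 0) ->
  continuous_on_nonneg (fun t => f t / g t).
Proof.
  rewrite !continuous_on_nonneg_extend; intros Hf Hg Hg0 x.
  apply (continuous_mult (extend_nonneg f) (fun s => / extend_nonneg g s)); auto.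
  apply continuous_Rinv_comp; auto.
  apply Hg0, Rmax_r.
Qed.

Lemma ex_RInt_continuous_on_nonneg (f : R -> R) (t : R) :
  continuous_on_nonneg f -> 0 <= t -> ex_RInt f 0 t.
Proof.
  intros Hf Ht; apply ex_RInt_ext with (extend_nonneg f).
  - intros x Hx; rewrite Rmin_left in Hx by lra; apply extend_nonneg_id; lra.
  - apply (ex_RInt_continuous (V := R_CompleteNormedModule)).
    intros x _; now apply continuous_extend_nonneg.
Qed.

Lemma is_derive_RInt_nonneg (f : R -> R) (t : R) :
  continuous_on_nonneg f -> 0 < t -> is_derive (RInt f 0) t (f t).
Proof.
  intros Hf Ht; apply (is_derive_RInt f (RInt f 0) 0 t); [|now apply Hf].
  exists (mkposreal _ Ht); intros b Hb%ball_R_interval; cbn in Hb.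
  apply (RInt_correct (V := R_CompleteNormedModule)).
  apply ex_RInt_continuous_on_nonneg; auto; lra.
Qed.

Lemma continuous_on_nonneg_RInt (f : R -> R) :
  continuous_on_nonneg f -> continuous_on_nonneg (RInt f 0).
Proof.
  intros Hf; apply continuous_on_nonneg_of_eq with (RInt (extend_nonneg f) 0).
  - intros x; apply (@ex_derive_continuous R_AbsRing R_NormedModule).
    exists (extend_nonneg f x).
    apply (is_derive_RInt _ _ 0 x); [|now apply continuous_extend_nonneg].
    apply filter_forall; intros b; apply (RInt_correct (V := R_CompleteNormedModule)).
    apply (ex_RInt_continuous (V := R_CompleteNormedModule)).
    intros z _; now apply continuous_extend_nonneg.
  - intros s Hs; apply RInt_ext; intros x Hx.
    rewrite Rmin_left in Hx by lra; apply extend_nonneg_id; lra.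
Qed.

Lemma solves_on_nonneg_zero_const (g : R -> R) :
  solves_on_nonneg g (fun _ => 0) -> forall t, 0 <= t -> g t = g 0.
Proof.
  intros [Hg' [_ Hg0]].
  assert (Hconst : forall s t, 0 < s <= t -> g t = g s).
  { intros s t Hst.
    destruct (MVT_gen g s t (fun _ => 0)) as [x [_ Hx]]; [| |lra].
    - intros x Hx; rewrite Rmin_left in Hx by lra; apply Hg'; lra.
    - intros x Hx; rewrite Rmin_left in Hx by lra.
      apply continuity_pt_filterlim, (@ex_derive_continuous R_AbsRing R_NormedModule).
      exists 0; apply Hg'; lra. }
  intros t Ht; destruct (Req_dec t 0) as [-> | Ht0]; [reflexivity|].
  assert (Htpos : 0 < t) by lra.
  apply (filterlim_locally_unique (F := at_right 0) g); [|exact Hg0].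
  apply filterlim_ext_loc with (fun _ => g t); [|apply filterlim_const].
  exists (mkposreal _ Htpos); intros s Hs%ball_R_interval Hs0; cbn in Hs.
  apply Hconst; lra.
Qed.

Lemma linear_ode_exp_RInt (c f : R -> R) :
  continuous_on_nonneg c -> solves_on_nonneg f (fun t => c t * f t) ->
  forall t, 0 <= t -> f t = f 0 * exp (RInt c 0 t).
Proof.
  intros Hc [Hf' Hf] t Ht.
  set (C := RInt c 0).
  set (g := fun s => f s * exp (- C s)).
  assert (Hg : solves_on_nonneg g (fun _ => 0)).
  { split.
    - intros s Hs; unfold g.
      assert (Hexp : is_derive (fun s => exp (- C s)) s (- c s * exp (- C s))).
      { apply (is_derive_comp exp (fun s => - C s)); [apply is_derive_exp|].
        apply (is_derive_opp C), is_derive_RInt_nonneg; assumption. }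
      replace 0 with (c s * f s * exp (- C s) + f s * (- c s * exp (- C s))) by ring.
      exact (is_derive_mult _ _ s _ _ (Hf' s Hs) Hexp Rmult_comm).
    - apply continuous_on_nonneg_mult; [exact Hf|].
      apply (continuous_on_nonneg_comp exp (fun s => - C s)).
      + intros x; apply continuous_exp.
      + now apply continuous_on_nonneg_opp, continuous_on_nonneg_RInt. }
  assert (Hgt := solves_on_nonneg_zero_const g Hg t Ht); unfold g, C in Hgt.
  rewrite (RInt_point 0 c : RInt c 0 0 = 0), Ropp_0, exp_0, Rmult_1_r in Hgt.
  rewrite <- Hgt, Rmult_assoc, <- exp_plus, Rplus_opp_l, exp_0; ring.
Qed.

Lemma incidence_ratio (b s i : R) :
  0 < s -> 0 < s + i -> b * i / (s + i) = b * (i / s) / (1 + i / s).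
Proof. intros Hs Hsi; field; lra. Qed.

Section SIR.

Variables (alpha : R) (beta S I : R -> R).
Hypothesis beta_cont : continuous_on_nonneg beta.
Hypothesis SI_pos : forall t, 0 <= t -> 0 < S t + I t.
Hypothesis S_ode : solves_on_nonneg S (fun t => - (beta t * S t * I t / (S t + I t))).
Hypothesis I_ode :
  solves_on_nonneg I (fun t => beta t * S t * I t / (S t + I t) - alpha * I t).

Lemma S_exp_RInt t :
  0 <= t -> S t = S 0 * exp (- RInt (fun s => beta s * I s / (S s + I s)) 0 t).
Proof.
  intros Ht.
  assert (Hincidence : continuous_on_nonneg (fun s => beta s * I s / (S s + I s))).
  { apply continuous_on_nonneg_div.
    - apply continuous_on_nonneg_mult; [exact beta_cont | apply I_ode].
    - apply continuous_on_nonneg_plus; [apply S_ode | apply I_ode].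
    - intros s Hs; specialize (SI_pos s Hs); lra. }
  rewrite <- (RInt_opp (V := R_CompleteNormedModule)) by
    (apply ex_RInt_continuous_on_nonneg; assumption).
  refine (linear_ode_exp_RInt (fun s => - (beta s * I s / (S s + I s))) S _ _ t Ht).
  - now apply continuous_on_nonneg_opp.
  - split; [|apply S_ode].
    intros s Hs; unfold Rdiv.
    replace (- (beta s * I s * / (S s + I s)) * S s)
      with (- (beta s * S s * I s * / (S s + I s))) by ring.
    now apply S_ode.
Qed.

Hypothesis S0_pos : 0 < S 0.

Lemma S_pos t : 0 <= t -> 0 < S t.
Proof.
  intros Ht; rewrite S_exp_RInt by exact Ht.
  apply Rmult_lt_0_compat; [exact S0_pos | apply exp_pos].
Qed.

Lemma ratio_exp_RInt t :
  0 <= t -> I t / S t = I 0 / S 0 * exp (RInt (fun s => beta s - alpha) 0 t).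
Proof.
  apply (linear_ode_exp_RInt (fun s => beta s - alpha) (fun s => I s / S s)).
  - apply continuous_on_nonneg_plus; [exact beta_cont | apply continuous_on_nonneg_const].
  - split.
    + intros s Hs.
      assert (HS := S_pos s (Rlt_le _ _ Hs)); assert (HSI := SI_pos s (Rlt_le _ _ Hs)).
      replace ((beta s - alpha) * (I s / S s)) with
        (((beta s * S s * I s / (S s + I s) - alpha * I s) * S s
          - I s * (- (beta s * S s * I s / (S s + I s)))) / S s ^ 2)
        by (field; lra).
      apply is_derive_div; [apply I_ode; lra | apply S_ode; lra | lra].
    + apply continuous_on_nonneg_div; [apply I_ode | apply S_ode |].
      intros s Hs; specialize (S_pos s Hs); lra.
Qed.

End SIR.

Theorem mainTheorem4
  (alpha : R) (beta : R -> R) (S0 I0 : R) (S I Rm : R -> R)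
  (Halpha : 0 < alpha)
  (Hbeta_cont : continuous_on_nonneg beta)
  (Hbeta_pos : forall t, 0 <= t -> 0 < beta t)
  (HS0 : 0 < S0) (HI0 : 0 <= I0)
  (Hpos : forall t, 0 <= t -> 0 < S t + I t)
  (HSode : solves_on_nonneg S (fun t => - (beta t * S t * I t / (S t + I t))))
  (HIode : solves_on_nonneg I (fun t => beta t * S t * I t / (S t + I t) - alpha * I t))
  (HRode : solves_on_nonneg Rm (fun t => alpha * I t))
  (HSinit : S 0 = S0) (HIinit : I 0 = I0) :
  let y := fun t => I0 / S0 * exp (RInt (fun s => beta s - alpha) 0 t) in
  forall t, 0 <= t ->
    I t / S t = y t /\
    S t = S0 * exp (- RInt (fun s => beta s * y s / (1 + y s)) 0 t) /\
    I t = S t * y t.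
Proof.
  intros y t Ht.
  assert (HS0' : 0 < S 0) by (rewrite HSinit; exact HS0).
  assert (Hratio : forall s, 0 <= s -> I s / S s = y s).
  { intros s Hs; unfold y; rewrite <- HSinit, <- HIinit.
    now apply (ratio_exp_RInt alpha beta S I). }
  assert (HSpos : forall s, 0 <= s -> 0 < S s)
    by (apply (S_pos alpha beta S I); assumption).
  split; [|split].
  - now apply Hratio.
  - rewrite (S_exp_RInt alpha beta S I) by assumption; rewrite HSinit.
    do 3 f_equal; apply RInt_ext; intros s Hs.
    rewrite Rmin_left, Rmax_right in Hs by lra.
    rewrite <- Hratio by lra.
    apply incidence_ratio; [apply HSpos | apply Hpos]; lra.
  - rewrite <- (Hratio t Ht); field.
    specialize (HSpos t Ht); lra.
Qed.
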